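(* Consider the TVFJ dynamics described in the context, fix $\epsilon>0$, $w>0$, and integers $t_1<t_2<\dots<t_d$. Suppose that among the consecutive temporal graphs $\mathcal G_{t_1}^{t_2},\mathcal G_{t_2}^{t_3},\dots,\mathcal G_{t_{d-1}}^{t_d}$, exactly $\alpha$ are defected temporal graphs (with parameters $\epsilon,w$), and let $\delta_1,\dots,\delta_\alpha$ denote the lengths of these $\alpha$ defected subintervals. Then \[ \|\Phi(t_d,t_1)\|\le\prod_{a=1}^{\alpha}\bigl(1-\epsilon w^{\delta_a}\bigr). \]
   Context: There are $n$ agents $\mathcal V=\{\mathrm v_1,\dots,\mathrm v_n\}$ with opinions $\mathbf x[t]\in\mathbb R^n$ and a fixed innate opinion vector $\mathbf s\in[0,1]^n$, evolving by the TVFJ model $\mathbf x[t+1]=\Lambda[t]W[t]\mathbf x[t]+(I-\Lambda[t])\mathbf s$, where $W[t]$ is row-stochastic and $\Lambda[t]=\mathrm{diag}(\lambda_1[t],\dots,\lambda_n[t])$ with $\lambda_i[t]\in[0,1]$. Standing assumptions: (i) $\lambda_i[t]=0$ iff $w_{ij}[t]=0$ for all $j$; (ii) there is no $\tau$ with $\Lambda[\tau]=0$. The state transition matrix is $\Phi(t,\tau)=\Lambda[t-1]W[t-1]\cdots\Lambda[\tau]W[\tau]$ for $t>\tau$, $\Phi(\tau,\tau)=I$. Norm: $\|A\|:=\max_i\sum_j|a_{ij}|$. Graphs: $\mathcal G[t]$ has directed edge $(\mathrm v_j,\mathrm v_i)$ iff $w_{ij}[t]>0$; the temporal graph on $[t_a,t_b]$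 is $\mathcal G_{t_a}^{t_b}=\{\mathcal G[k]\}_{k=t_a}^{t_b}$. A temporal edge $(\mathrm v_j,\mathrm v_i,t)$ is a $w$-edge if $w_{ij}[t]\ge w$. A temporal path is a sequence of temporal edges $(\mathrm v_j,\mathrm v_{i_1},t_{k_0}),(\mathrm v_{i_1},\mathrm v_{i_2},t_{k_1}),\dots,(\mathrm v_{i_m},\mathrm v_i,t_{k_m})$ across successive time steps. Agent $\mathrm v_i$ is $\epsilon$-stubborn at time $t$ if $\lambda_i[t]\le1-\epsilon$. An influential path is a temporal path whose starting agent is $\epsilon$-stubborn and whose edges are all $w$-edges. $\mathcal G_{t_a}^{t_b}$ is a defected temporal graph (DTG) if there exists $k\in[t_a,t_b)$ such that, in layer $\mathcal G[k]$, every agent is either $\epsilon$-stubborn or connected to an $\epsilon$-stubborn agent via a finite influential path entirely contained in $[t_a,t_b)$. *)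

From mathcomp Require Import all_boot all_order all_algebra.
Set Implicit Arguments. Unset Strict Implicit. Unset Printing Implicit Defensive.
Import Order.TTheory GRing.Theory Num.Theory.
Local Open Scope ring_scope.

Section TVFJ.
Variables (R : realFieldType) (n : nat).
Variables (W : nat -> 'M[R]_n) (lam : nat -> 'I_n -> R).

Definition Lambda (t : nat) : 'M[R]_n := diag_mx (\row_i lam t i).

(* PhiAux m tau = Phi(tau + m, tau) *)
Fixpoint PhiAux (m tau : nat) : 'M[R]_n :=
  match m with
  | 0 => 1%:M
  | m'.+1 => (Lambda (tau + m') *m W (tau + m')) *m PhiAux m' tau
  end.

(* State transition matrix Phi(t, tau) = Lambda[t-1]W[t-1]...Lambda[tau]W[tau]
   (t > tau), Phi(tau, tau) = I; only meaningful for tau <= t. *)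
Definition Phi (t tau : nat) : 'M[R]_n := PhiAux (t - tau) tau.

Definition eps_stubborn (eps : R) (i : 'I_n) (t : nat) : Prop := lam t i <= 1 - eps.

Definition w_edge (w : R) (j i : 'I_n) (t : nat) : Prop := w <= W t i j.

(* The temporal path (j, p_0, t0), (p_0, p_1, t0+1), ..., (p_{m-1}, p_m, t0+m)
   with starting agent j, first edge at time t0, edges at successive time
   steps, all edges being w-edges. *)
Definition w_temporal_path (w : R) (t0 : nat) (j : 'I_n) (p : seq 'I_n) : Prop :=
  forall l, (l < size p)%N -> w_edge w (nth j (j :: p) l) (nth j p l) (t0 + l).

(* Influential path: starting agent epsilon-stubborn (at the step t0-1 that
   produces the state x_j[t0] carried by the first edge), all edges w-edges. *)
Definition influential_path (eps w : R) (t0 : nat) (j : 'I_n) (p : seq 'I_n) : Prop :=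
  eps_stubborn eps j t0.-1 /\ w_temporal_path w t0 j p.

Definition DTG (eps w : R) (ta tb : nat) : Prop :=
  exists k : nat, (ta <= k < tb)%N /\
    forall i : 'I_n,
      eps_stubborn eps i k \/
      exists (j : 'I_n) (t0 : nat) (p : seq 'I_n),
        [/\ p != [::], last j p = i,
            (ta < t0)%N (* stubbornness time t0-1 >= ta *),
            (t0 + (size p).-1)%N = k (* path ends in layer G[k] *)
          & influential_path eps w t0 j p].

End TVFJ.

Definition mxnorm (R : realFieldType) (n : nat) (A : 'M[R]_n) : R :=
  \big[Num.max/0]_(i < n) \sum_(j < n) `|A i j|.

(** Since every [Phi(s, t_1)] is entrywise nonnegative, its norm is its largest
    row sum, and the vector [x(s)] of row sums obeys the homogeneous dynamics
    [x(s+1) = Lambda[s] W[s] x(s)] with [x(t_1) = 1].  This map never increases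
    a uniform upper bound [c].  On a defected interval, at the layer [k] every
    agent is either stubborn, so its row sum drops to at most [(1 - eps) c], or
    sits at the end of an influential path: the deficit [eps c] of the stubborn
    source is passed along each [w]-edge with a loss factor of at most [w], so
    it still amounts to [eps w^delta c] at the end.  Multiplying over the
    defected intervals gives the bound. *)

From mathcomp Require Import all_boot all_order all_algebra.
From mathcomp Require Import ring lra zify.
Set Implicit Arguments. Unset Strict Implicit. Unset Printing Implicit Defensive.
Import Order.TTheory GRing.Theory Num.Theory.
Local Open Scope ring_scope.

Lemma ler_decay_factor (R : realFieldType) (c eps w : R) (m m' : nat) :
  0 <= c -> 0 <= eps -> 0 <= w <= 1 -> (m <= m')%N ->
  c * (1 - eps * w ^+ m) <= c * (1 - eps * w ^+ m').
Proof.
move=> c_ge0 eps_ge0 /andP[w_ge0 w_le1] le_mm'.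
rewrite ler_wpM2l // lerD2l lerN2 ler_wpM2l //.
exact: ler_wiXn2l.
Qed.

Lemma mxnorm_le (R : realFieldType) (n : nat) (A : 'M[R]_n) (c : R) :
  0 <= c -> (forall i, \sum_(j < n) `|A i j| <= c) -> mxnorm A <= c.
Proof. by move=> c_ge0 rowA; apply: bigmax_le => // i _; apply: rowA. Qed.

Section RowSumDynamics.

Variables (R : realFieldType) (n : nat).
Variables (W : nat -> 'M[R]_n) (lam : nat -> 'I_n -> R).
Hypothesis W_ge0 : forall k (i j : 'I_n), 0 <= W k i j.
Hypothesis W_row1 : forall k (i : 'I_n), \sum_(j < n) W k i j = 1.
Hypothesis lam01 : forall k (i : 'I_n), 0 <= lam k i <= 1.

Let lam_ge0 k i : 0 <= lam k i. Proof. by case/andP: (lam01 k i). Qed.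
Let lam_le1 k i : lam k i <= 1. Proof. by case/andP: (lam01 k i). Qed.

Definition lamW_mul (s : nat) (x : 'I_n -> R) (i : 'I_n) : R :=
  lam s i * \sum_(k < n) W s i k * x k.

Lemma lamW_mul_ge0 s x i : (forall k, 0 <= x k) -> 0 <= lamW_mul s x i.
Proof.
move=> x_ge0; apply: mulr_ge0 => //.
by apply: sumr_ge0 => k _; apply: mulr_ge0.
Qed.

Lemma lamW_mul_le s x (c : R) i : (forall k, x k <= c) -> lamW_mul s x i <= lam s i * c.
Proof.
move=> x_le; rewrite ler_wpM2l //.
apply: (@le_trans _ _ (\sum_(k < n) W s i k * c)).
  by apply: ler_sum => k _; apply: ler_wpM2l.
by rewrite -mulr_suml W_row1 mul1r.
Qed.

(* The weighted average [\sum_k W s i k * x k] falls short of [c] by at least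
   the single term [W s i u * (c - x u)]. *)
Lemma lamW_mul_le_deficit s x (c w delta : R) i u :
  (forall k, 0 <= x k) -> (forall k, x k <= c) ->
  0 <= w -> 0 <= delta -> w <= W s i u -> x u <= c - delta ->
  lamW_mul s x i <= c - w * delta.
Proof.
move=> x_ge0 x_le w_ge0 delta_ge0 w_le_Wiu xu_le.
set X := \sum_(k < n) W s i k * x k.
have X_ge0 : 0 <= X by apply: sumr_ge0 => k _; apply: mulr_ge0.
have X_def : X = c - \sum_(k < n) W s i k * (c - x k).
  under [in RHS]eq_bigr do rewrite mulrBr.
  by rewrite sumrB -mulr_suml W_row1 mul1r opprB addrCA subrr addr0.
have gap_u : w * delta <= \sum_(k < n) W s i k * (c - x k).
  rewrite (bigD1 u) //= -[leLHS]addr0; apply: lerD.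
    by apply: ler_pM => //; rewrite lerBrDl -lerBrDr.
  by apply: sumr_ge0 => k _; apply: mulr_ge0; rewrite ?subr_ge0.
apply: (@le_trans _ _ X); first by rewrite -[leRHS]mul1r ler_wpM2r.
by rewrite X_def lerD2l lerN2.
Qed.

Section Trajectory.

Variables (x : nat -> 'I_n -> R) (s0 : nat).
Hypothesis x_ge0_start : forall i, 0 <= x s0 i.
Hypothesis xS : forall s, (s0 <= s)%N -> x s.+1 =1 lamW_mul s (x s).

Lemma traj_ge0 s i : (s0 <= s)%N -> 0 <= x s i.
Proof.
move=> /subnKC <-; elim: (s - s0)%N i => [|m IH] i; first by rewrite addn0.
by rewrite addnS xS ?leq_addr //; apply: lamW_mul_ge0.
Qed.

Lemma traj_le_step s (c : R) i :
  (s0 <= s)%N -> (forall k, x s k <= c) -> x s.+1 i <= lam s i * c.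
Proof. by move=> le_s0s x_le; rewrite xS //; apply: lamW_mul_le. Qed.

Lemma traj_le_stable s s' (c : R) :
  (s0 <= s)%N -> (s <= s')%N -> (forall k, x s k <= c) -> forall k, x s' k <= c.
Proof.
move=> le_s0s /subnKC <- x_le; elim: (s' - s)%N => [|m IH] k; first by rewrite addn0.
have le_s0sm : (s0 <= s + m)%N by rewrite (leq_trans le_s0s) ?leq_addr.
have c_ge0 : 0 <= c by apply: le_trans (IH k); apply: traj_ge0.
rewrite addnS; apply: le_trans (traj_le_step k le_s0sm IH) _.
by rewrite -[leRHS]mul1r ler_wpM2r.
Qed.

Lemma traj_le_influential (eps w : R) t0 j p (c : R) :
  0 <= eps -> 0 <= w -> (s0 < t0)%N -> (forall k, x t0.-1 k <= c) ->
  influential_path W lam eps w t0 j p ->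
  forall l, (l <= size p)%N -> x (t0 + l)%N (nth j (j :: p) l) <= c * (1 - eps * w ^+ l).
Proof.
move=> eps_ge0 w_ge0 lt_s0t0 x_le [j_stubborn p_wpath].
have t0E : t0 = t0.-1.+1 by rewrite prednK // (leq_ltn_trans _ lt_s0t0).
have le_s0t0' : (s0 <= t0.-1)%N by rewrite -ltnS -t0E.
have c_ge0 : 0 <= c by apply: le_trans (x_le j); apply: traj_ge0.
have x_le_later l k : x (t0 + l)%N k <= c.
  by apply: (traj_le_stable le_s0t0' _ x_le); rewrite (leq_trans (leq_pred _)) ?leq_addr.
elim=> [|l IH] lt_lp.
  rewrite addn0 expr0 mulr1 {1}t0E; apply: le_trans (traj_le_step j le_s0t0' x_le) _.
  by rewrite mulrC ler_wpM2l.
rewrite addnS xS; last by rewrite (leq_trans (ltnW lt_s0t0)) ?leq_addr.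
have -> : c * (1 - eps * w ^+ l.+1) = c - w * (c * eps * w ^+ l) by rewrite exprS; ring.
apply: (lamW_mul_le_deficit _ (x_le_later l) w_ge0 _ (p_wpath l lt_lp)).
- by move=> k; apply: traj_ge0; rewrite (leq_trans (ltnW lt_s0t0)) ?leq_addr.
- by apply: mulr_ge0; [apply: mulr_ge0 | apply: exprn_ge0].
- by have := IH (ltnW lt_lp); rewrite mulrBr mulr1 mulrA.
Qed.

Lemma traj_le_DTG (eps w : R) ta tb (c : R) :
  0 <= eps -> 0 <= w <= 1 -> (s0 <= ta)%N -> DTG W lam eps w ta tb ->
  (forall k, x ta k <= c) -> forall i, x tb i <= c * (1 - eps * w ^+ (tb - ta)).
Proof.
move=> eps_ge0 w01 le_s0ta [k [/andP[le_tak lt_ktb] layer_k]] x_le.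
have le_s0k : (s0 <= k)%N by apply: leq_trans le_tak.
have x_le_k := traj_le_stable le_s0ta le_tak x_le.
suff x_le_kS i : x k.+1 i <= c * (1 - eps * w ^+ (tb - ta)).
  by apply: traj_le_stable x_le_kS; rewrite ?(leq_trans le_s0k).
have c_ge0 : 0 <= c by apply: le_trans (x_le_k i); apply: traj_ge0.
case: (layer_k i) => [i_stubborn | [j [t0 [p [p_n0 p_last lt_tat0 p_end p_infl]]]]].
  apply: le_trans (traj_le_step i le_s0k x_le_k) _.
  apply: le_trans (ler_decay_factor c_ge0 eps_ge0 w01 (leq0n (tb - ta))).
  by rewrite expr0 mulr1 mulrC ler_wpM2l.
have t0_sizeE : (t0 + size p)%N = k.+1.
  by case: (p) p_n0 p_end => // v q _ <-; rewrite addnS.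
have le_tat0' : (ta <= t0.-1)%N by rewrite -ltnS prednK // (leq_ltn_trans _ lt_tat0).
have w_ge0 : 0 <= w by case/andP: w01.
have := traj_le_influential eps_ge0 w_ge0 (leq_ltn_trans le_s0ta lt_tat0)
  (traj_le_stable le_s0ta le_tat0' x_le) p_infl (leqnn (size p)).
rewrite t0_sizeE (nth_last j (j :: p)) /= p_last => /le_trans; apply.
by apply: ler_decay_factor => //; lia.
Qed.

Lemma traj_le_prod_DTG (eps w : R) d (t : nat -> nat) (isDTG : nat -> bool) :
  0 <= eps -> 0 <= w <= 1 -> (s0 <= t 1)%N -> (forall i, x (t 1%N) i <= 1) ->
  (forall a, (1 <= a < d)%N -> (t a < t a.+1)%N) ->
  (forall a, (1 <= a < d)%N -> isDTG a -> DTG W lam eps w (t a) (t a.+1)) ->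
  forall a, (1 <= a <= d)%N -> forall i,
    x (t a) i <= \prod_(1 <= b < a | isDTG b) (1 - eps * w ^+ (t b.+1 - t b)).
Proof.
move=> eps_ge0 w01 le_s0t1 x_le1 t_incr DTG_of.
have le_s0t a : (1 <= a <= d)%N -> (s0 <= t a)%N.
  elim: a => [|[|a] IH] // a_range.
  by apply: leq_trans (IH _) (ltnW (t_incr _ _)); lia.
elim=> [|[|a] IH] // a_range i; first by rewrite big_geq.
have a_lt : (1 <= a.+1 < d)%N by lia.
rewrite big_mkcond big_nat_recr //= -big_mkcond.
case: ifP => [a_DTG | _].
  by apply: traj_le_DTG (IH _) i => //; [apply: le_s0t; lia | apply: DTG_of | lia].
rewrite mulr1; apply: traj_le_stable (IH _) i; last by lia.
- by apply: le_s0t; lia.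
- exact/ltnW/t_incr.
Qed.

End Trajectory.

Lemma Lambda_mulE s i k : (Lambda lam s *m W s) i k = lam s i * W s i k.
Proof. by rewrite mul_diag_mx !mxE. Qed.

Lemma PhiSn s tau :
  (tau <= s)%N -> Phi W lam s.+1 tau = Lambda lam s *m W s *m Phi W lam s tau.
Proof. by move=> le_tau_s; rewrite /Phi subSn //= subnKC. Qed.

Lemma Phi_ge0 s tau i j : 0 <= Phi W lam s tau i j.
Proof.
rewrite /Phi; elim: (s - tau)%N i j => [|m IH] i j /=; first by rewrite mxE ler0n.
by rewrite mxE; apply: sumr_ge0 => k _; rewrite Lambda_mulE !mulr_ge0.
Qed.

Definition Phi_rowsum (tau s : nat) (i : 'I_n) : R := \sum_(j < n) Phi W lam s tau i j.

Lemma Phi_rowsum_id tau i : Phi_rowsum tau tau i = 1.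
Proof.
rewrite /Phi_rowsum /Phi subnn (bigD1 i) //= mxE eqxx big1 ?addr0 // => j.
by rewrite mxE eq_sym => /negPf ->.
Qed.

Lemma Phi_rowsumSn tau s :
  (tau <= s)%N -> Phi_rowsum tau s.+1 =1 lamW_mul s (Phi_rowsum tau s).
Proof.
move=> le_tau_s i; rewrite /Phi_rowsum PhiSn //.
under eq_bigr do rewrite mxE.
rewrite exchange_big /= /lamW_mul mulr_sumr; apply: eq_bigr => k _.
by rewrite Lambda_mulE mulrA mulr_sumr.
Qed.

End RowSumDynamics.

Theorem lemma2 (R : realFieldType) (n : nat)
    (W : nat -> 'M[R]_n) (lam : nat -> 'I_n -> R)
    (eps w : R) (d : nat) (t : nat -> nat) (isDTG : nat -> bool) :
  (0 < n)%N ->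
  (* W[t] row-stochastic *)
  (forall k (i j : 'I_n), 0 <= W k i j) ->
  (forall k (i : 'I_n), \sum_(j < n) W k i j = 1) ->
  (* lambda_i[t] in [0,1] *)
  (forall k (i : 'I_n), 0 <= lam k i <= 1) ->
  (* standing assumption (i) *)
  (forall k (i : 'I_n), lam k i = 0 <-> (forall j : 'I_n, W k i j = 0)) ->
  (* standing assumption (ii): no tau with Lambda[tau] = 0 *)
  ~ (exists tau, Lambda lam tau = 0) ->
  0 < eps -> 0 < w -> w <= 1 ->
  (0 < d)%N ->
  (* t_1 < t_2 < ... < t_d *)
  (forall a, (1 <= a < d)%N -> (t a < t a.+1)%N) ->
  (* isDTG a marks exactly the subintervals G_{t_a}^{t_(a+1)} that are DTGs *)
  (forall a, (1 <= a < d)%N -> (isDTG a <-> DTG W lam eps w (t a) (t a.+1))) ->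
  mxnorm (Phi W lam (t d) (t 1%N)) <=
    \prod_(1 <= a < d | isDTG a)
       (1 - eps * w ^+ (t a.+1 - t a)).
Proof.
move=> n_gt0 W_ge0 W_row1 lam01 _ _ eps_gt0 w_gt0 w_le1 d_gt0 t_incr DTGP.
set tau := t 1%N.
have w01 : 0 <= w <= 1 by rewrite ltW.
have start_ge0 i : 0 <= Phi_rowsum W lam tau tau i by rewrite Phi_rowsum_id.
have start_le1 i : Phi_rowsum W lam tau tau i <= 1 by rewrite Phi_rowsum_id.
have rowsum_le := traj_le_prod_DTG W_ge0 W_row1 lam01 start_ge0
  (@Phi_rowsumSn _ _ W lam tau) (ltW eps_gt0) w01 (leqnn tau) start_le1 t_incr
  (fun a a_range => (DTGP a a_range).1).
have rowsum_ge0 i : 0 <= Phi_rowsum W lam tau (t d) i.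
  by apply: sumr_ge0 => j _; apply: Phi_ge0.
have d_range : (1 <= d <= d)%N by rewrite d_gt0 leqnn.
apply: mxnorm_le => [|i].
  exact: le_trans (rowsum_ge0 (Ordinal n_gt0)) (rowsum_le _ d_range _).
rewrite (eq_bigr (fun j => Phi W lam (t d) tau i j)) ?rowsum_le // => j _.
by rewrite ger0_norm // (Phi_ge0 W_ge0 lam01).
Qed.
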